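(* If $\mathcal Q$ is a countable collection of probability measures on $\{0,1\}^{\mathbb N}$, then $\mathcal Q$ is UME-learnable.
   Context: $\{0,1\}^{\mathbb N}$ carries the product $\sigma$-algebra. For a probability measure $\mu$ on $\{0,1\}^{\mathbb N}$, $\mathrm{Mean}(\mu)\in[0,1]^{\mathbb N}$ is the vector whose $j$-th coordinate is $\mathbb E[X_j]$ for $X\sim\mu$. A collection $\mathcal Q$ of such measures is UME-learnable if there exist (measurable) estimators $\mathcal A_n:(\{0,1\}^{\mathbb N})^n\to[0,1]^{\mathbb N}$, $n\in\mathbb N$, such that for every $\mu\in\mathcal Q$, $\mathbb E_{S\sim\mu^n}\|\mathcal A_n(S)-\mathrm{Mean}(\mu)\|_\infty\to0$ as $n\to\infty$, where $S$ consists of $n$ i.i.d. draws from $\mu$. *)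

From HB Require Import structures.
From mathcomp Require Import all_boot all_order all_algebra.
From mathcomp Require Import all_classical all_reals all_analysis.
Set Implicit Arguments. Unset Strict Implicit. Unset Printing Implicit Defensive.
Import Order.TTheory GRing.Theory Num.Theory.
Import numFieldNormedType.Exports.
Local Open Scope classical_set_scope.
Local Open Scope ring_scope.

(** Product sigma-algebra on bit strings [I -> bool] (bool carrying the
    discrete sigma-algebra): generated by the coordinate cylinders
    [{x | x i = true}], i.e. by the coordinate projections. *)
Definition cyl_sets (I : Type) : set (set (I -> bool)) :=
  [set [set x : I -> bool | x i] | i in [set: I]].

Definition Cantor : Type := g_sigma_algebraType (@cyl_sets nat).

Definition Mean (R : realType) (mu : probability Cantor R) (j : nat) : R :=
  fine (\int[mu]_x (((x : nat -> bool) j)%:R : R)%:E).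

Definition sample (n : nat) : Type := 'I_n -> nat -> bool.

Definition sample_sets (n : nat) : set (set (sample n)) :=
  [set [set S : sample n | S ij.1 ij.2] | ij in [set: 'I_n * nat]].

(** Measurability of an estimator A : ({0,1}^N)^n -> [0,1]^N, where the
    codomain carries the product (Borel) sigma-algebra: every coordinate
    map S |-> A S j is measurable. *)
Definition estimator_measurable (R : realType) (n : nat)
    (A : sample n -> nat -> R) : Prop :=
  forall (j : nat) (B : set R), measurable B ->
    <<s @sample_sets n >> ((fun S => A S j) @^-1` B).

Definition supdist (R : realType) (v w : nat -> R) : \bar R :=
  ereal_sup (range (fun j => (`|v j - w j|)%:E)).

Definition scons (T : Type) (x : T) (s : nat -> T) : nat -> T :=
  fun k => if k is k'.+1 then s k' else x.

(** Expectation under the n-fold product mu^n of a nonnegative functional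
    F of the first n draws s 0, ..., s (n-1), computed as the iterated
    integral (Tonelli):
      E_{mu^n}[F] = \int mu(dx_0) ... \int mu(dx_{n-1}) F(x_0,...,x_{n-1}). *)
Fixpoint expect_n (R : realType) (mu : probability Cantor R) (n : nat)
    (F : (nat -> Cantor) -> \bar R) : \bar R :=
  match n with
  | 0 => F (fun _ => (fun _ => false) : Cantor)
  | n'.+1 => \int[mu]_x expect_n mu n' (fun s => F (scons x s))
  end.

Definition first_n (n : nat) (s : nat -> Cantor) : sample n :=
  fun i : 'I_n => (s (nat_of_ord i) : nat -> bool).

Definition UME_learnable (R : realType) (Q : set (probability Cantor R)) : Prop :=
  exists A : forall n : nat, sample n -> nat -> R,
    (forall n, estimator_measurable (A n)) /\
    (forall n S j, 0 <= A n S j <= 1) /\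
    (forall mu, Q mu ->
       (fun n => expect_n mu n (fun s => supdist (A n (@first_n n s)) (Mean mu)))
         @ \oo --> 0%E).

(** Enumerate the candidate mean vectors [cand 0, cand 1, ...] of the measures
    in Q and let r = floor(n^(1/4)).  From n draws, compute the empirical means
    of the first r coordinates and output the first [cand l], l < r, that is
    within 1/r of them on all r coordinates.  Let k0 index the true law.  If all
    r empirical means are 1/r-accurate, then k0 is consistent, and a consistent
    l <= k0 is 2/r-close to [cand k0] on r coordinates; since only finitely many
    l <= k0 exist, for r large this forces [cand l = cand k0], so the error is 0.
    Otherwise the error is at most 1 <= sum_(j<r) (r (emp_j - p_j))^2, whose
    expectation is r^2 sum_(j<r) p_j (1 - p_j) / n <= r^3 / n <= 1 / r. *)

From Stdlib Require Import PeanoNat.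
From HB Require Import structures.
From mathcomp Require Import all_boot all_order all_algebra.
From mathcomp Require Import all_classical all_reals all_analysis.
From mathcomp Require Import measurable_realfun ring lra zify.
Set Implicit Arguments.
Unset Strict Implicit.
Unset Printing Implicit Defensive.
Import Order.TTheory GRing.Theory Num.Theory.
Local Open Scope classical_set_scope.
Local Open Scope ring_scope.

Section FinitelyDetermined.
Variables (X : pointedType) (K : eqType).
Variables (coord : K -> X -> bool) (update : X -> K -> bool -> X).
Variable G : set (set X).
Hypothesis coord_update : forall k x b, coord k (update x k b) = b.
Hypothesis coord_update_neq :
  forall k k' x b, k' != k -> coord k' (update x k b) = coord k' x.
Hypothesis G_coord : forall k, G [set x | coord k x].

Lemma finitely_determined_measurable (L : seq K) (T : Type) (f : X -> T) :
  (forall x y, {in L, forall k, coord k x = coord k y} -> f x = f y) ->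
  forall B : set T, <<s G >> (f @^-1` B).
Proof.
elim: L T f => [|k L IH] T f f_det B.
  have fE x : f x = f point by apply: f_det.
  have [Bf|nBf] := pselect (B (f point)).
    rewrite (_ : _ @^-1` _ = setT); first exact: (@measurableT _ (g_sigma_algebraType G)).
    by apply/seteqP; split=> // x _; rewrite /preimage/= fE.
  rewrite (_ : _ @^-1` _ = set0); first exact: (@measurable0 _ (g_sigma_algebraType G)).
  by apply/seteqP; split=> // x; rewrite /preimage/= fE.
pose f_at b x := f (update x k b).
have f_at_det b : forall x y, {in L, forall k', coord k' x = coord k' y} ->
    f_at b x = f_at b y.
  move=> x y xy; apply: f_det => k'; rewrite inE => /predU1P[->|k'L].
    by rewrite !coord_update.
  have [->|k'k] := eqVneq k' k; first by rewrite !coord_update.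
  by rewrite !coord_update_neq // xy.
have fE x : f x = f_at (coord k x) x.
  apply: f_det => k' _; have [->|k'k] := eqVneq k' k; first by rewrite coord_update.
  by rewrite coord_update_neq.
have -> : f @^-1` B = ([set x | coord k x] `&` f_at true @^-1` B) `|`
                      (~` [set x | coord k x] `&` f_at false @^-1` B).
  apply/seteqP; split=> x /=; rewrite fE; first by case: (coord k x); [left|right].
  by move=> [[-> //]|[/negP/negbTE -> //]].
have Gk : <<s G >> [set x | coord k x] by apply: sub_sigma_algebra.
apply: (@measurableU _ (g_sigma_algebraType G));
  apply: (@measurableI _ (g_sigma_algebraType G)).
- exact: Gk.
- exact: IH (f_at_det true) B.
- exact: (@measurableC _ (g_sigma_algebraType G)).
- exact: IH (f_at_det false) B.
Qed.

End FinitelyDetermined.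

Definition cantor_update (x : nat -> bool) (k : nat) (b : bool) : nat -> bool :=
  fun k' => if k' == k then b else x k'.

Lemma measurable_fun_of_coord {d} {Y : measurableType d} j (f : Cantor -> Y) :
  (forall x y : Cantor, (x : nat -> bool) j = (y : nat -> bool) j -> f x = f y) ->
  measurable_fun setT f.
Proof.
move=> f_det _ B _; rewrite setTI.
apply: (@finitely_determined_measurable (nat -> bool) nat (fun k x => x k)
  cantor_update (@cyl_sets nat) _ _ _ [:: j] _ f _ B).
- by move=> k x b; rewrite /cantor_update eqxx.
- by move=> k k' x b /negbTE; rewrite /cantor_update => ->.
- by move=> k; exists k.
- by move=> x y /(_ j (mem_head _ _)); apply: f_det.
Qed.

Section CoordinateLaws.
Context {R : realType} (mu : probability Cantor R).
Local Open Scope ereal_scope.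

Let cyl (j : nat) : set Cantor := [set x | (x : nat -> bool) j].

Definition coord_prob (j : nat) : R := fine (mu (cyl j)).

Lemma measurable_cyl j : measurable (cyl j).
Proof. by apply: sub_sigma_algebra; exists j. Qed.

Lemma mu_cyl j : mu (cyl j) = (coord_prob j)%:E.
Proof.
rewrite /coord_prob fineK // ge0_fin_numE ?measure_ge0 //.
by apply: le_lt_trans (probability_le1 _ (measurable_cyl j)) _; rewrite ltey.
Qed.

Lemma coord_prob_ge0 j : (0 <= coord_prob j)%R.
Proof. by rewrite -lee_fin -mu_cyl measure_ge0. Qed.

Lemma coord_prob_le1 j : (coord_prob j <= 1)%R.
Proof. by rewrite -lee_fin -mu_cyl probability_le1 //; exact: measurable_cyl. Qed.

Lemma integral_coord j (h : bool -> R) : (forall b, 0 <= h b)%R ->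
  \int[mu]_x (h ((x : nat -> bool) j))%:E =
  (h true * coord_prob j + h false * (1 - coord_prob j))%:E.
Proof.
move=> h_ge0.
have indic_cyl x : \1_(cyl j) x = ((x : nat -> bool) j)%:R :> R.
  rewrite indicE; case: (boolP ((x : nat -> bool) j)) => xj.
    by rewrite mem_set.
  by rewrite memNset //; apply/negP.
have indic_ncyl x : \1_(~` cyl j) x = (~~ (x : nat -> bool) j)%:R :> R.
  rewrite indicE; case: (boolP ((x : nat -> bool) j)) => xj.
    by rewrite memNset.
  by rewrite mem_set //; apply/negP.
have hE x : (h ((x : nat -> bool) j))%:E =
    (h true)%:E * (\1_(cyl j) x)%:E + (h false)%:E * (\1_(~` cyl j) x)%:E.
  by rewrite indic_cyl indic_ncyl; case: (x j); rewrite /= ?mule1 ?mule0 ?adde0 ?add0e.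
under eq_integral do rewrite hE.
rewrite ge0_integralD //; last 4 first.
- by move=> x _; rewrite mule_ge0 // lee_fin.
- by apply: (measurable_fun_of_coord (j := j)) => x y xy; rewrite !indic_cyl xy.
- by move=> x _; rewrite mule_ge0 // lee_fin.
- by apply: (measurable_fun_of_coord (j := j)) => x y xy; rewrite !indic_ncyl xy.
rewrite !ge0_integralZl_EFin //; last 2 first.
- by apply: (measurable_fun_of_coord (j := j)) => x y xy; rewrite !indic_ncyl xy.
- by apply: (measurable_fun_of_coord (j := j)) => x y xy; rewrite !indic_cyl xy.
have mcyl := measurable_cyl j.
rewrite !integral_indic ?setIT //; last exact: measurableC.
have muC : mu (~` cyl j) = 1 - mu (cyl j) by exact: probability_setC.
by rewrite [X in _ + _ * X]muC [X in _ * X + _]mu_cyl mu_cyl -EFinB -!EFinM -EFinD.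
Qed.

Lemma Mean_coord_prob j : Mean mu j = coord_prob j.
Proof.
rewrite /Mean (@integral_coord j (fun b : bool => b%:R)) => [|b]; last exact: ler0n.
by rewrite /= mul1r mul0r addr0.
Qed.

Lemma integral_sum_coord d (h : nat -> bool -> R) : (forall j b, 0 <= h j b)%R ->
  \int[mu]_x (\sum_(j < d) h j ((x : nat -> bool) j))%:E =
  (\sum_(j < d) (h j true * coord_prob j + h j false * (1 - coord_prob j)))%:E.
Proof.
move=> h_ge0; under eq_integral do rewrite -sumEFin.
rewrite ge0_integral_sum //; first last.
- by move=> j x _; rewrite lee_fin.
- by move=> j; apply: (measurable_fun_of_coord (j := j)) => x y ->.
by rewrite -sumEFin; apply: eq_bigr => j _; exact: integral_coord.
Qed.

End CoordinateLaws.

Lemma Mean_in01 (R : realType) (mu : probability Cantor R) j : (0 <= Mean mu j <= 1)%R.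
Proof. by rewrite Mean_coord_prob coord_prob_ge0 coord_prob_le1. Qed.

Section IteratedExpectation.
Context {R : realType} (mu : probability Cantor R).
Local Open Scope ereal_scope.

Lemma expect_n_ge0 n (F : (nat -> Cantor) -> \bar R) :
  (forall s, 0 <= F s) -> 0 <= expect_n mu n F.
Proof.
elim: n F => [|n IH] F F_ge0 /=; first exact: F_ge0.
by apply: integral_ge0 => x _; exact: IH.
Qed.

Lemma expect_n_le n (F G : (nat -> Cantor) -> \bar R) :
  (forall s, 0 <= F s) -> (forall s, F s <= G s) -> expect_n mu n F <= expect_n mu n G.
Proof.
elim: n F G => [|n IH] F G F_ge0 FG /=; first exact: FG.
have G_ge0 s : 0 <= G s by exact: le_trans (F_ge0 s) (FG s).
rewrite !ge0_integralTE => [|x|x]; try exact: expect_n_ge0.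
apply: ereal_sup_le => _ [h hF <-]; exists h => //= x.
exact: le_trans (hF x) (IH _ _ _ _).
Qed.

Definition coord_var (j : nat) : R := (coord_prob mu j * (1 - coord_prob mu j))%R.

Lemma coord_var_ge0 j : (0 <= coord_var j)%R.
Proof. by rewrite mulr_ge0 ?subr_ge0 ?coord_prob_ge0 ?coord_prob_le1. Qed.

Definition centered_coord (w : R) (j : nat) (x : Cantor) : R :=
  (w * (((x : nat -> bool) j)%:R - coord_prob mu j))%R.

Lemma expect_n_sum_sq_centered (w : R) n d (c : nat -> R) :
  expect_n mu n
    (fun s => (\sum_(j < d) (c j + \sum_(i < n) centered_coord w j (s i)) ^+ 2)%:E) =
  (\sum_(j < d) (c j ^+ 2 + n%:R * (w ^+ 2 * coord_var j)))%:E.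
Proof.
elim: n c => [|n IH] c /=.
  by congr EFin; apply: eq_bigr => j _; rewrite big_ord0 addr0 mul0r addr0.
transitivity (\int[mu]_x
    (\sum_(j < d) ((c j + centered_coord w j x) ^+ 2 + n%:R * (w ^+ 2 * coord_var j)))%:E).
  apply: eq_integral => x _; rewrite -(IH (fun j => c j + centered_coord w j x)%R).
  congr expect_n; apply/funext => s.
  by congr EFin; apply: eq_bigr => j _; rewrite big_ord_recl addrA.
have h_ge0 j (b : bool) : (0 <= (c j + w * (b%:R - coord_prob mu j)) ^+ 2 +
    n%:R * (w ^+ 2 * coord_var j))%R.
  apply: addr_ge0; first exact: sqr_ge0.
  by rewrite mulr_ge0 // mulr_ge0 ?coord_var_ge0 // sqr_ge0.
rewrite (integral_sum_coord _ _ h_ge0).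
by congr (_%:E); apply: eq_bigr => j _; rewrite /coord_var /= -nat1r; ring.
Qed.

End IteratedExpectation.

Definition qroot (n : nat) : nat := Nat.sqrt (Nat.sqrt n).

Lemma qroot_pow4_le n : (qroot n ^ 4 <= n)%N.
Proof.
have [le_sqrt2 _] := Nat.sqrt_spec (Nat.sqrt n) (Nat.le_0_l _).
have [le_sqrt _] := Nat.sqrt_spec n (Nat.le_0_l _).
rewrite /qroot !expnS expn0 muln1; nia.
Qed.

Lemma qroot_cvg : qroot @ \oo --> \oo.
Proof.
move=> P [K _ KP]; exists (K ^ 4)%N => // n /= le_K4n; apply: KP.
have sqrt2_mono := Nat.sqrt_le_mono _ _ (Nat.sqrt_le_mono _ _ (ssrnat.leP le_K4n)).
rewrite /qroot /=; move: sqrt2_mono.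
by rewrite (_ : (K ^ 4 = (K * K) * (K * K))%N) ?Nat.sqrt_square; [move/ssrnat.leP | lia].
Qed.

Lemma cvg_qroot_inv (R : realType) : (fun n => ((qroot n)%:R^-1 : R)) @ \oo --> 0.
Proof.
have inv_cvg0 : (fun r : nat => (r%:R : R)^-1) @ \oo --> 0.
  by rewrite -(@cvg_shiftS R^o); exact: cvg_harmonic.
exact: cvg_comp qroot_cvg inv_cvg0.
Qed.

Section SupDistance.
Context {R : realType}.
Local Open Scope ereal_scope.

Lemma supdist_ge0 (v w : nat -> R) : 0 <= supdist v w.
Proof.
apply: le_trans (ereal_sup_ubound _); last by exists 0%N.
by rewrite lee_fin.
Qed.

Lemma supdist_le (v w : nat -> R) (e : \bar R) :
  (forall j, (`|v j - w j|)%:E <= e) -> supdist v w <= e.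
Proof. by move=> le_e; apply: ge_ereal_sup => _ [j _ <-]. Qed.

Lemma supdist_in01_le1 (v w : nat -> R) :
  (forall j, 0 <= v j <= 1)%R -> (forall j, 0 <= w j <= 1)%R -> supdist v w <= 1.
Proof.
move=> v01 w01; apply: supdist_le => j; rewrite lee_fin.
by have /andP[? ?] := v01 j; have /andP[? ?] := w01 j; rewrite ler_norml; apply/andP; split; lra.
Qed.

End SupDistance.

Section Estimator.
Context {R : realType} (cand : nat -> nat -> R).

Definition emp_mean {n} (S : sample n) (j : nat) : R := (\sum_(i < n) (S i j)%:R) / n%:R.

Definition consistent {n} (S : sample n) (l : nat) : bool :=
  all (fun j => `|emp_mean S j - cand l j| <= (qroot n)%:R^-1) (iota 0 (qroot n)).

Definition selected {n} (S : sample n) : nat := find (consistent S) (iota 0 (qroot n)).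

Definition estimator {n} (S : sample n) (j : nat) : R :=
  if (selected S < qroot n)%N then cand (selected S) j else 0.

Lemma selected_le n (S : sample n) l :
  (l < qroot n)%N -> consistent S l -> (selected S <= l)%N.
Proof.
move=> lr cons_l; rewrite leqNgt; apply/negP => /(before_find 0%N).
by rewrite nth_iota // add0n cons_l.
Qed.

Lemma selected_consistent n (S : sample n) :
  (selected S < qroot n)%N -> consistent S (selected S).
Proof.
move=> sel_r; have has_cons : has (consistent S) (iota 0 (qroot n)).
  by rewrite has_find size_iota.
by have := nth_find 0%N has_cons; rewrite nth_iota // add0n.
Qed.

Definition sample_update n (S : sample n) (ij : 'I_n * nat) (b : bool) : sample n :=
  fun i j => if (i == ij.1) && (j == ij.2) then b else S i j.

Lemma measurable_estimator n : estimator_measurable (@estimator n).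
Proof.
move=> j B _.
apply: (@finitely_determined_measurable (sample n) _ (fun ij S => S ij.1 ij.2)
  (@sample_update n) (@sample_sets n) _ _ _
  [seq (i, k) | i <- enum 'I_n, k <- iota 0 (qroot n)]).
- by move=> [i k] S b; rewrite /sample_update /= !eqxx.
- by move=> [i k] [i' k'] S b; rewrite /sample_update /= xpair_eqE => /negbTE ->.
- by move=> [i k]; exists (i, k).
move=> S S' SS'.
have emp_eq k : (k < qroot n)%N -> emp_mean S k = emp_mean S' k.
  move=> kr; congr (_ / _); apply: eq_bigr => i _; rewrite (SS' (i, k)) //.
  by apply/allpairsP; exists (i, k); rewrite mem_enum mem_iota.
have cons_eq : consistent S =1 consistent S'.
  by move=> l; apply: eq_in_all => k; rewrite mem_iota => /andP[_ /emp_eq ->].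
by rewrite /estimator /selected (eq_find cons_eq).
Qed.

Lemma estimator_in01 n (S : sample n) j :
  (forall l j, 0 <= cand l j <= 1) -> 0 <= estimator S j <= 1.
Proof. by move=> cand01; rewrite /estimator; case: ifP; rewrite ?lexx ?ler01. Qed.

Definition separated (k0 r : nat) : Prop :=
  forall l, (l <= k0)%N ->
    (forall j, (j < r)%N -> `|cand l j - cand k0 j| <= 2 / r%:R) -> cand l = cand k0.

Lemma separated_pair_near l k0 : \forall r \near \oo,
  (forall j, (j < r)%N -> `|cand l j - cand k0 j| <= 2 / r%:R) -> cand l = cand k0.
Proof.
have [eq_lk0|neq_lk0] := pselect (cand l = cand k0); first exact: nearW.
have [j neq_j] : exists j, cand l j != cand k0 j.
  apply: contrapT => all_eq; apply: neq_lk0; apply/funext => j.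
  by apply/eqP; apply: contrapT => /negP ne_j; apply: all_eq; exists j.
have del_gt0 : 0 < `|cand l j - cand k0 j| by rewrite normr_gt0 subr_eq0.
near=> r => close; exfalso.
have jr : (j < r)%N by near: r; exact: nbhs_infty_gt.
have r_big : 2 / `|cand l j - cand k0 j| < r%:R by near: r; exact: nbhs_infty_gtr.
have r_gt0 : 0 < r%:R :> R by rewrite ltr0n (leq_ltn_trans _ jr).
move: (close j jr) r_big; rewrite ler_pdivlMr // ltr_pdivrMr //; lra.
Unshelve. all: by end_near.
Qed.

Lemma separated_near k0 : \forall r \near \oo, separated k0 r.
Proof.
have sep_upto K : \forall r \near \oo, forall l, (l <= K)%N ->
    (forall j, (j < r)%N -> `|cand l j - cand k0 j| <= 2 / r%:R) -> cand l = cand k0.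
  elim: K => [|K IH].
    by apply: filterS (separated_pair_near 0 k0) => r sep0 l; rewrite leqn0 => /eqP ->.
  apply: filterS2 IH (separated_pair_near K.+1 k0) => r sepK sepK1 l.
  by rewrite leq_eqVlt ltnS => /predU1P[->|/sepK].
exact: sep_upto k0.
Qed.

Lemma estimator_eq_of_close n (S : sample n) k0 :
  separated k0 (qroot n) -> (k0 < qroot n)%N ->
  (forall j, (j < qroot n)%N -> `|emp_mean S j - cand k0 j| <= (qroot n)%:R^-1) ->
  estimator S = cand k0.
Proof.
set r := qroot n => sep k0r close.
have cons_k0 : consistent S k0 by apply/allP => j; rewrite mem_iota => /andP[_ /close].
have sel_le := selected_le k0r cons_k0.
have sel_r : (selected S < r)%N := leq_ltn_trans sel_le k0r.
have /allP cons_sel := selected_consistent sel_r.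
rewrite /estimator -/r sel_r; apply: sep => // j jr.
have r_gt0 : 0 < r%:R :> R by rewrite ltr0n (leq_ltn_trans _ jr).
rewrite (_ : 2 / r%:R = r%:R^-1 + r%:R^-1); last by field; rewrite lt0r_neq0.
apply: le_trans (ler_distD (emp_mean S j) _ _) _; rewrite distrC.
by apply: lerD; [apply: cons_sel; rewrite mem_iota | exact: close].
Qed.

Lemma supdist_estimator_le n (S : sample n) k0 :
  (forall l j, 0 <= cand l j <= 1) -> separated k0 (qroot n) -> (k0 < qroot n)%N ->
  (supdist (estimator S) (cand k0) <=
   (\sum_(j < qroot n) ((qroot n)%:R * (emp_mean S j - cand k0 j)) ^+ 2)%:E)%E.
Proof.
set r := qroot n => cand01 sep k0r.
have [close|] := boolP [forall j : 'I_r, `|emp_mean S j - cand k0 j| <= r%:R^-1].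
  rewrite (estimator_eq_of_close sep k0r) => [|j jr]; last first.
    exact: (forallP close (Ordinal jr)).
  by apply: supdist_le => j; rewrite subrr normr0 lee_fin sumr_ge0 // => i _; exact: sqr_ge0.
rewrite negb_forall => /existsP[j]; rewrite -ltNge => far.
have r_gt0 : 0 < r%:R :> R by rewrite ltr0n (leq_ltn_trans _ k0r).
have one_le : 1 <= (r%:R * (emp_mean S j - cand k0 j)) ^+ 2.
  rewrite -real_normK ?num_real // exprn_ege1 // normrM ger0_norm ?ler0n //.
  by rewrite -ler_pdivrMl // ltW // mulr1.
apply: le_trans (supdist_in01_le1 (fun j => estimator_in01 S j cand01) (cand01 k0)) _.
rewrite lee_fin (bigD1 j) //= (le_trans one_le) // lerDl.
by apply: sumr_ge0 => i _; exact: sqr_ge0.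
Qed.

End Estimator.

Section ExpectedError.
Context {R : realType} (mu : probability Cantor R) (cand : nat -> nat -> R).

Lemma sum_centered_coord (a : R) n (s : nat -> Cantor) j : (0 < n)%N ->
  \sum_(i < n) centered_coord mu (a / n%:R) j (s i) =
  a * (emp_mean (@first_n n s) j - coord_prob mu j).
Proof.
move=> n_gt0; rewrite /centered_coord /emp_mean -big_distrr /= sumrB sumr_const card_ord.
by rewrite /first_n; field; rewrite lt0r_neq0 // ltr0n.
Qed.

Lemma coord_var_le1 j : coord_var mu j <= 1.
Proof.
have := coord_prob_ge0 mu j; have := coord_prob_le1 mu j.
rewrite /coord_var; nra.
Qed.

Lemma expect_supdist_estimator_le n k0 :
  (forall l j, 0 <= cand l j <= 1) -> cand k0 = Mean mu ->
  separated cand k0 (qroot n) -> (k0 < qroot n)%N ->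
  (expect_n mu n (fun s => supdist (estimator cand (@first_n n s)) (Mean mu)) <=
   ((qroot n)%:R^-1)%:E)%E.
Proof.
set r := qroot n => cand01 k0E sep k0r.
have r_gt0 : (0 < r)%N := leq_ltn_trans (leq0n _) k0r.
have n_gt0 : (0 < n)%N.
  by apply: leq_trans (qroot_pow4_le n); rewrite expn_gt0 r_gt0.
have err_le s : (supdist (estimator cand (@first_n n s)) (Mean mu) <=
    (\sum_(j < r) (0 + \sum_(i < n) centered_coord mu (r%:R / n%:R) j (s i)) ^+ 2)%:E)%E.
  rewrite -k0E.
  under eq_bigr => j _ do rewrite add0r sum_centered_coord // -Mean_coord_prob -k0E.
  exact: supdist_estimator_le.
apply: le_trans (expect_n_le mu n (fun s => supdist_ge0 _ _) err_le) _.
rewrite (expect_n_sum_sq_centered mu _ n r (fun=> 0)) lee_fin.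
have r_pos : 0 < r%:R :> R by rewrite ltr0n.
have n_pos : 0 < n%:R :> R by rewrite ltr0n.
apply: le_trans (_ : \sum_(j < r) r%:R ^+ 2 / n%:R <= _).
  apply: ler_sum => j _; rewrite expr0n add0r.
  rewrite [leRHS](_ : _ = n%:R * ((r%:R / n%:R) ^+ 2 * 1)); last by field; rewrite lt0r_neq0.
  by rewrite ler_wpM2l // ler_wpM2l ?sqr_ge0 ?coord_var_le1.
have r4_le_n : r%:R ^+ 4 <= n%:R :> R by rewrite -natrX ler_nat qroot_pow4_le.
rewrite sumr_const card_ord -mulr_natl.
rewrite [leLHS](_ : _ = r%:R ^+ 4 / n%:R * r%:R^-1); last by field; rewrite !lt0r_neq0.
by rewrite mulr1 -[leRHS]mul1r ler_wpM2r ?invr_ge0 ?ler0n // ler_pdivrMr // mul1r.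
Qed.

End ExpectedError.

Lemma countable_candidates (R : realType) (Q : set (probability Cantor R)) :
  countable Q -> exists cand : nat -> nat -> R,
    (forall l j, 0 <= cand l j <= 1) /\ (forall mu, Q mu -> exists k, cand k = Mean mu).
Proof.
move=> /countable_injP[g g_inj].
pose cand k j := if pselect (exists mu, Q mu /\ g mu = k) is left ex
  then Mean (projT1 (cid ex)) j else 0.
exists cand; split => [l j|mu Qmu].
  by rewrite /cand; case: pselect => [ex|_]; [exact: Mean_in01 | rewrite lexx ler01].
exists (g mu); apply/funext => j; rewrite /cand; case: pselect => [ex|]; last first.
  by case; exists mu.
by case: (cid ex) => mu' [Qmu' g_eq] /=; rewrite (g_inj mu' mu) // inE.
Qed.

Theorem theorem1 (R : realType) (Q : set (probability Cantor R)) :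
  countable Q -> UME_learnable Q.
Proof.
move=> /countable_candidates[cand [cand01 candQ]].
exists (fun n => @estimator R cand n); split; first exact: measurable_estimator.
split=> [n S j|mu /candQ[k0 k0E]]; first exact: estimator_in01.
apply: (@squeeze_cvge _ _ _ _ (cst 0%E) _ (fun n => ((qroot n)%:R^-1)%:E)).
- near=> n; apply/andP; split; first by apply: expect_n_ge0 => s; exact: supdist_ge0.
  apply: (expect_supdist_estimator_le cand01 k0E).
    by near: n; exact: qroot_cvg (separated_near cand k0).
  by near: n; exact: qroot_cvg (nbhs_infty_gt k0).
- exact: cvg_cst.
- by apply: cvg_EFin; [exact: nearW | exact: cvg_qroot_inv].
Unshelve. all: by end_near.
Qed.
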